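(* Let $X$ be a supersingular abelian surface over a field of characteristic $p>0$, let $D$ be a real quadratic field, and let $i:D\hookrightarrow\mathrm{End}^0(X)$ be an injective ring homomorphism with $i(1)=\mathrm{Id}_X$. Then the $D$-algebras $\mathrm{End}^0(X,i)$ and $\mathbb H_{p,D}=\mathbb H_p\otimes_{\mathbb Q}D$ are isomorphic.
   Context: $\mathrm{End}^0(X)=\mathrm{End}(X)\otimes\mathbb Q$ (endomorphisms over an algebraic closure); for supersingular abelian surfaces $\mathrm{End}^0(X)\cong\mathrm{Mat}_2(\mathbb H_p)$, where $\mathbb H_p$ is the quaternion $\mathbb Q$-algebra ramified exactly at $p$ and $\infty$. $\mathrm{End}^0(X,i)=\{u\in\mathrm{End}^0(X): i(y)u=ui(y)\ \forall y\in D\}$ is the centralizer of $i(D)$, a $D$-algebra via $i$. *)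

From HB Require Import structures.
From mathcomp Require Import all_boot all_order all_algebra all_field.
From mathcomp Require Import ring.
Set Implicit Arguments. Unset Strict Implicit. Unset Printing Implicit Defensive.
Import GRing.Theory Num.Theory.
Local Open Scope ring_scope.

Section Quat.
Variables (K : fieldType) (a b : K).
Definition quat (a' b' : K) : Type := (K^o * K^o * K^o * K^o)%type.
Local Notation Q := (quat a b).
HB.instance Definition _ := GRing.Lmodule.copy Q (K^o * K^o * K^o * K^o)%type.
Definition qmul (x y : Q) : Q :=
  let: (x0, x1, x2, x3) := x in let: (y0, y1, y2, y3) := y in
  (x0 * y0 + a * x1 * y1 + b * x2 * y2 - a * b * x3 * y3,
   x0 * y1 + x1 * y0 - b * x2 * y3 + b * x3 * y2,
   x0 * y2 + x2 * y0 + a * x1 * y3 - a * x3 * y1,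
   x0 * y3 + x3 * y0 + x1 * y2 - x2 * y1).
Definition qone : Q := (1, 0, 0, 0).
Lemma qaddE (x0 x1 x2 x3 y0 y1 y2 y3 : K) :
  ((x0, x1, x2, x3) : Q) + (y0, y1, y2, y3) = (x0 + y0, x1 + y1, x2 + y2, x3 + y3).
Proof. by []. Qed.
Lemma qmulA : associative qmul.
Proof. by move=> [[[x0 x1] x2] x3] [[[y0 y1] y2] y3] [[[z0 z1] z2] z3] /=; congr (_, _, _, _); ring. Qed.
Lemma qmul1 : left_id qone qmul.
Proof. by move=> [[[x0 x1] x2] x3] /=; congr (_, _, _, _); ring. Qed.
Lemma qmulr1 : right_id qone qmul.
Proof. by move=> [[[x0 x1] x2] x3] /=; congr (_, _, _, _); ring. Qed.
Lemma qmulDl : left_distributive qmul +%R.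
Proof. by move=> [[[x0 x1] x2] x3] [[[y0 y1] y2] y3] [[[z0 z1] z2] z3]; rewrite ?qaddE /= ?qaddE; congr (_, _, _, _); ring. Qed.
Lemma qmulDr : right_distributive qmul +%R.
Proof. by move=> [[[x0 x1] x2] x3] [[[y0 y1] y2] y3] [[[z0 z1] z2] z3]; rewrite ?qaddE /= ?qaddE; congr (_, _, _, _); ring. Qed.
Lemma qone_neq0 : qone != 0 :> Q.
Proof. by apply/negP => /eqP [] /eqP; rewrite oner_eq0. Qed.
HB.instance Definition _ := GRing.Zmodule_isNzRing.Build Q qmulA qmul1 qmulr1 qmulDl qmulDr qone_neq0.
End Quat.
Arguments quat {K} a' b'.

(* quat a b  = the quaternion algebra (a,b)_K over a field K, with K-basis
   1, i, j, k=ij, i^2 = a, j^2 = b, ij = -ji.  An element (x0,x1,x2,x3)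
   stands for x0 + x1 i + x2 j + x3 k.  For a field extension D/Q and
   a,b in Q one has (a,b)_Q (x)_Q D = (a,b)_D, which is how the tensor
   product H_p (x)_Q D is modelled below.                                 *)

(* For nonzero integers a b, the quaternion algebra (a,b)_Q ramifies at a
   place v iff the Hilbert symbol (a,b)_v equals -1.  Write a = l^alpha u,
   b = l^beta v with u, v prime to l.
   - l odd  : (a,b)_l = (-1)^(alpha beta (l-1)/2) (u/l)^beta (v/l)^alpha
   - l = 2  : (a,b)_2 = (-1)^(eps(u)eps(v) + alpha omega(v) + beta omega(u))
   - v = oo : (a,b)_oo = -1 iff a < 0 and b < 0.
   (Serre, A Course in Arithmetic, Ch. III, Thm. 1.)  The booleans below are
   true exactly when the corresponding symbol equals -1.                  *)

Definition unit_part (l : nat) (a : int) : int :=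
  (a %/ (l ^ logn l `|a|)%N%:Z)%Z.

Definition is_sq_mod (l : nat) (u : int) : bool :=
  [exists x : 'I_l, ((x%:Z ^+ 2 - u) %% l%:Z == 0)%Z].

Definition eps2 (u : int) : bool := ((u %% 4)%Z == 3).
Definition omega2 (u : int) : bool := ((u %% 8)%Z == 3) || ((u %% 8)%Z == 5).

Definition hilbert_neg (l : nat) (a b : int) : bool :=
  let al := logn l `|a| in let be := logn l `|b| in
  let u := unit_part l a in let v := unit_part l b in
  if l == 2 then
    [&& eps2 u & eps2 v] (+) (odd al && omega2 v) (+) (odd be && omega2 u)
  else
    (odd (al * be) && ((l %% 4)%N == 3)%N) (+) (odd be && ~~ is_sq_mod l u)
      (+) (odd al && ~~ is_sq_mod l v).

Definition hilbert_neg_inf (a b : int) : bool := (a < 0) && (b < 0).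

Definition ramified_exactly_at_p_inf (p : nat) (a b : int) : Prop :=
  hilbert_neg_inf a b /\ (forall l : nat, prime l -> (hilbert_neg l a b <-> l = p)).

Definition Hq (a b : int) := quat (a%:~R : rat) (b%:~R : rat).
Definition HqD (D : fieldExtType rat) (a b : int) := quat (a%:~R : D) (b%:~R : D).

Definition real_quadratic_field (D : fieldExtType rat) : Prop :=
  \dim {: D} = 2%N /\
  exists (d : rat) (delta : D),
    [/\ 0 < d, forall r : rat, r ^+ 2 != d & delta ^+ 2 = d%:A].

(* End^0(X, i): the centralizer of i(D) *)
Definition centralizes (D : fieldExtType rat) (A : nzRingType) (i : D -> A) (u : A) : Prop :=
  forall y : D, i y * u = u * i y.

Definition centralizer_Dalg_iso (D : fieldExtType rat) (a b : int)
    (i : D -> 'M[Hq a b]_2) : Prop :=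
  exists f : 'M[Hq a b]_2 -> HqD D a b,
    [/\ (forall u v, centralizes i u -> centralizes i v -> f (u + v) = f u + f v),
        (forall u v, centralizes i u -> centralizes i v -> f (u * v) = f u * f v),
        f 1 = 1 &
        (forall (y : D) u, centralizes i u -> f (i y * u) = y *: f u)] /\
    [/\ (forall u v, centralizes i u -> centralizes i v -> f u = f v -> u = v) &
        (forall q : HqD D a b, exists2 u, centralizes i u & f u = q)].

(* Since H_p is ramified at infinity it is a definite quaternion algebra: a division algebra in
   which no element squares to a positive non-square rational. Write D = Q(delta) with
   delta^2 = d and let J = i(delta) in Mat_2(H_p). From J^2 = d the entry J_10 cannot vanish,
   so P = [1, J_00; 0, J_10] is invertible and conjugates J to the companion matrix
   J0 = [0, d; 1, 0]. The centralizer of J0 consists of the matrices [x, d z; z, x], and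
   [x, d z; z, x] |-> x + delta z is a D-algebra isomorphism onto H_p (x)_Q D. *)
From HB Require Import structures.
From mathcomp Require Import all_boot all_order all_algebra all_field ring lra.
Import Order.TTheory GRing.Theory Num.Theory.
Set Implicit Arguments. Unset Strict Implicit. Unset Printing Implicit Defensive.
Local Open Scope ring_scope.

Section QuatAlgebra.
Variables (K : fieldType) (a b : K).
Local Notation Q := (quat a b).

Lemma quat_mulE (x0 x1 x2 x3 y0 y1 y2 y3 : K) :
  ((x0, x1, x2, x3) : Q) * (y0, y1, y2, y3) =
  (x0 * y0 + a * x1 * y1 + b * x2 * y2 - a * b * x3 * y3,
   x0 * y1 + x1 * y0 - b * x2 * y3 + b * x3 * y2,
   x0 * y2 + x2 * y0 + a * x1 * y3 - a * x3 * y1,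
   x0 * y3 + x3 * y0 + x1 * y2 - x2 * y1).
Proof. by []. Qed.

Lemma quat_scaleE (c x0 x1 x2 x3 : K) :
  c *: ((x0, x1, x2, x3) : Q) = (c * x0, c * x1, c * x2, c * x3).
Proof. by []. Qed.

Lemma quat_addE (x0 x1 x2 x3 y0 y1 y2 y3 : K) :
  ((x0, x1, x2, x3) : Q) + (y0, y1, y2, y3) = (x0 + y0, x1 + y1, x2 + y2, x3 + y3).
Proof. by []. Qed.

Lemma quat_scalerAl (c : K) (u v : Q) : (c *: u : Q) * v = c *: (u * v).
Proof.
case: u v => [[[x0 x1] x2] x3] [[[y0 y1] y2] y3].
by rewrite ?quat_scaleE ?quat_mulE ?quat_scaleE; congr (_, _, _, _); ring.
Qed.

Lemma quat_scalerAr (c : K) (u v : Q) : u * (c *: v : Q) = c *: (u * v).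
Proof.
case: u v => [[[x0 x1] x2] x3] [[[y0 y1] y2] y3].
by rewrite ?quat_scaleE ?quat_mulE ?quat_scaleE; congr (_, _, _, _); ring.
Qed.

(* Not [c%:A]: on [quat a b] that notation picks the unit of the componentwise product algebra. *)
Definition quatC (c : K) : Q := c *: (1 : Q).

Lemma quatCE (c : K) : quatC c = (c, 0, 0, 0).
Proof. by rewrite /quatC quat_scaleE mulr1 mulr0. Qed.

Lemma quatC_mull (c : K) (u : Q) : quatC c * u = c *: u.
Proof. by rewrite quat_scalerAl mul1r. Qed.

Lemma quatC_mulr (c : K) (u : Q) : u * quatC c = c *: u.
Proof. by rewrite quat_scalerAr mulr1. Qed.

Lemma quatC_comm (c : K) (u : Q) : quatC c * u = u * quatC c.
Proof. by rewrite quatC_mull quatC_mulr. Qed.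

Definition quat_conj (x : Q) : Q :=
  let: (x0, x1, x2, x3) := x in (x0, - x1, - x2, - x3).

Definition quat_norm (x : Q) : K := let: (x0, x1, x2, x3) := x in
  x0 ^+ 2 - a * x1 ^+ 2 - b * x2 ^+ 2 + a * b * x3 ^+ 2.

Lemma quat_mul_conj (x : Q) : x * quat_conj x = quatC (quat_norm x).
Proof.
case: x => [[[x0 x1] x2] x3].
by rewrite quat_mulE /= quatCE; congr (_, _, _, _); ring.
Qed.

Lemma quat_conj_mul (x : Q) : quat_conj x * x = quatC (quat_norm x).
Proof.
case: x => [[[x0 x1] x2] x3].
by rewrite quat_mulE /= quatCE; congr (_, _, _, _); ring.
Qed.

End QuatAlgebra.

Arguments quatC {K a b}.
Arguments quat_conj {K} a b.
Arguments quat_norm {K} a b.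

Section DefiniteQuat.
Variables (K : realFieldType) (a b : K).
Hypotheses (a_lt0 : a < 0) (b_lt0 : b < 0).
Local Notation Q := (quat a b).

Lemma quat_norm_ge0 (x0 x1 x2 x3 : K) :
  [/\ 0 <= x0 ^+ 2, 0 <= - a * x1 ^+ 2, 0 <= - b * x2 ^+ 2 & 0 <= a * b * x3 ^+ 2].
Proof.
split; rewrite ?sqr_ge0 // mulr_ge0 ?sqr_ge0 ?oppr_ge0 //.
- exact: ltW.
- exact: ltW.
- by rewrite nmulr_rge0 // ltW.
Qed.

Lemma quat_norm_eq0 (x : Q) : (quat_norm a b x == 0) = (x == 0).
Proof.
case: x => [[[x0 x1] x2] x3] /=.
apply/eqP/eqP => [N|[-> -> -> ->]]; last by ring.
have [n0 n1 n2 n3] := quat_norm_ge0 x0 x1 x2 x3.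
have sqr_eq0 (c y : K) : c != 0 -> c * y ^+ 2 = 0 -> y = 0.
  by move=> c0 /eqP; rewrite mulf_eq0 sqrf_eq0 (negbTE c0) => /eqP.
have na0 : - a != 0 by rewrite oppr_eq0 ltr0_neq0.
have nb0 : - b != 0 by rewrite oppr_eq0 ltr0_neq0.
have ab0 : a * b != 0 by rewrite mulf_neq0 ?ltr0_neq0.
have e0 : x0 = 0 by apply: (@sqr_eq0 1); rewrite ?oner_neq0 // mul1r; lra.
have e1 : x1 = 0 by apply: (sqr_eq0 _ _ na0); lra.
have e2 : x2 = 0 by apply: (sqr_eq0 _ _ nb0); lra.
have e3 : x3 = 0 by apply: (sqr_eq0 _ _ ab0); lra.
by rewrite e0 e1 e2 e3.
Qed.

Definition quat_inv (x : Q) : Q := (quat_norm a b x)^-1 *: quat_conj a b x.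

Lemma quat_mulV (x : Q) : x != 0 -> x * quat_inv x = 1.
Proof.
rewrite -quat_norm_eq0 => nx0.
by rewrite quat_scalerAr quat_mul_conj /quatC scalerA mulVf ?scale1r.
Qed.

Lemma quat_mulVr (x : Q) : x != 0 -> quat_inv x * x = 1.
Proof.
rewrite -quat_norm_eq0 => nx0.
by rewrite quat_scalerAl quat_conj_mul /quatC scalerA mulVf ?scale1r.
Qed.

Lemma quat_sqr_alg (c : K) (x : Q) : 0 < c -> x ^+ 2 = quatC c ->
  exists r : K, r ^+ 2 = c.
Proof.
case: x => [[[x0 x1] x2] x3] c_gt0.
rewrite expr2 quat_mulE quatCE => -[E0 E1 E2 E3].
exists x0; have [x0_0 | x0_neq0] := eqVneq x0 0.
  have [_ n1 n2 n3] := quat_norm_ge0 x0 x1 x2 x3.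
  have : c = x0 ^+ 2 - (- a * x1 ^+ 2) - (- b * x2 ^+ 2) - a * b * x3 ^+ 2.
    by rewrite -E0; ring.
  rewrite x0_0 expr0n /=; lra.
have x0M_eq0 y : (x0 * y) *+ 2 = 0 -> y = 0.
  by move=> /eqP; rewrite mulrn_eq0 /= mulf_eq0 (negbTE x0_neq0) => /eqP.
have e1 : x1 = 0 by apply: x0M_eq0; rewrite -E1; ring.
have e2 : x2 = 0 by apply: x0M_eq0; rewrite -E2; ring.
have e3 : x3 = 0 by apply: x0M_eq0; rewrite -E3; ring.
by rewrite -E0 e1 e2 e3; ring.
Qed.

End DefiniteQuat.

Lemma conj_mul (R : pzRingType) (p q x y : R) : p * q = 1 ->
  (q * x * p) * (q * y * p) = q * (x * y) * p.
Proof. by move=> pq; rewrite !mulrA -(mulrA _ p q) pq mulr1. Qed.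

Section Matrix2.
Variable R : pzRingType.
Local Notation M := 'M[R]_2.

Lemma mulmx2E (A B : M) i j : (A * B) i j = A i 0 * B 0 j + A i 1 * B 1 j.
Proof.
rewrite -mulmxE mxE big_ord_recl big_ord1.
by congr (A i _ * B _ j + A i _ * B _ j); apply: val_inj.
Qed.

Lemma matrix2P (A B : M) : A 0 0 = B 0 0 -> A 0 1 = B 0 1 -> A 1 0 = B 1 0 ->
  A 1 1 = B 1 1 -> A = B.
Proof.
move=> e00 e01 e10 e11; apply/matrixP => i j.
by case: i j => [[|[|//]] ?] [[|[|//]] ?]; [move: e00|move: e01|move: e10|move: e11];
  congr (_ = _); congr (_ _ _); apply: val_inj.
Qed.

Definition mx2 (x y z w : R) : M := \matrix_(k, l)
  if k == 0 then if l == 0 then x else y else if l == 0 then z else w.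

Lemma mx2_1 : (1 : M) = mx2 1 0 0 1.
Proof. by apply: matrix2P; rewrite !mxE. Qed.

Lemma scalar_mx2_mul (x : R) (A : M) k l : (x%:M * A) k l = x * A k l.
Proof. by rewrite -mulmxE mul_scalar_mx mxE. Qed.

Lemma scalar_mx2_comm (c : R) (A : M) : (forall y, c * y = y * c) -> c%:M * A = A * c%:M.
Proof.
move=> c_central; apply: matrix2P; rewrite !mulmx2E !mxE /=;
  by rewrite !(mulr0n, mulr1n, mulr0, mul0r, addr0, add0r).
Qed.

End Matrix2.

Section QuadraticExtension.
Variables (F : fieldType) (D : fieldExtType F) (d : F) (delta : D).
Hypotheses (d_nonsq : forall r : F, r ^+ 2 != d) (delta_sqr : delta ^+ 2 = d%:A).

Lemma delta_notin_base (c : F) : delta != c%:A.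
Proof.
apply/eqP => delta_c; move: (d_nonsq c) delta_sqr.
by rewrite delta_c -!in_algE -rmorphXn => /negP nsq /(fmorph_inj (in_alg D))/eqP.
Qed.

Lemma quad_coord_inj (r s r' s' : F) :
  r%:A + s *: delta = r'%:A + s' *: delta -> r = r' /\ s = s'.
Proof.
have [-> /addIr /(fmorph_inj (in_alg D)) -> // | s_neq] := eqVneq s s'.
move=> E; have Ed : (s - s') *: delta = (r' - r)%:A.
  by rewrite !scalerBl; apply/eqP; rewrite subr_eq addrAC -E [r%:A + _]addrC addrK.
move: (delta_notin_base ((r' - r) / (s - s'))).
by rewrite mulrC -scalerA -Ed scalerA mulVf ?scale1r ?eqxx ?subr_eq0.
Qed.

Hypothesis dimD : \dim {: D} = 2%N.

Lemma quad_coordP (y : D) : exists r s : F, y = r%:A + s *: delta.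
Proof.
have free_1delta : free [:: 1; delta].
  rewrite free_cons seq1_free span_seq1; apply/andP; split.
    apply/vlineP => -[k one_k].
    have k_neq0 : k != 0.
      by apply/eqP => k0; move: one_k; rewrite k0 scale0r => /eqP; rewrite oner_eq0.
    by move: (delta_notin_base k^-1); rewrite one_k scalerA mulVf ?scale1r ?eqxx.
  by apply: contra (delta_notin_base 0) => /eqP->; rewrite scale0r.
have basis_1delta : basis_of fullv [:: 1; delta].
  by rewrite basisEfree free_1delta subvf dimD.
have := coord_basis (X := [tuple 1; delta]) basis_1delta (memvf y).
by rewrite big_ord_recl big_ord1 /= => ->; do 2 eexists.
Qed.

End QuadraticExtension.

Section Companion.
Variable R : pzRingType.
Local Notation M := 'M[R]_2.

Definition companion2 (x : R) : M := mx2 0 x 1 0.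

Lemma mulmx2_mx2 (x y z w x' y' z' w' : R) :
  mx2 x y z w * mx2 x' y' z' w' =
  mx2 (x * x' + y * z') (x * y' + y * w') (z * x' + w * z') (z * y' + w * w').
Proof. by apply: matrix2P; rewrite !mulmx2E !mxE. Qed.

(* The columns of [mx2 1 (J 0 0) 0 (J 1 0)] are [e_1] and [J e_1]. *)
Lemma mx_conj_companion (J : M) (x : R) : J * J = x%:M ->
  J * mx2 1 (J 0 0) 0 (J 1 0) = mx2 1 (J 0 0) 0 (J 1 0) * companion2 x.
Proof.
move=> JJ; have := congr1 (fun A : M => A 0 0) JJ; have := congr1 (fun A : M => A 1 0) JJ.
rewrite !mulmx2E !mxE /= mulr1n mulr0n => J10 J00.
by apply: matrix2P; rewrite !mulmx2E !mxE /= ?(mulr0, mul0r, mulr1, mul1r, addr0, add0r).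
Qed.

Lemma mx2_unitriangular_inv (x y y' : R) : y * y' = 1 -> y' * y = 1 ->
  mx2 1 x 0 y * mx2 1 (- (x * y')) 0 y' = 1 /\ mx2 1 (- (x * y')) 0 y' * mx2 1 x 0 y = 1.
Proof.
move=> yy' y'y; rewrite !mulmx2_mx2 mx2_1 !(mulr0, mul0r, mulr1, mul1r, addr0, add0r).
by rewrite addNr yy' mulNr -mulrA y'y mulr1 addrN.
Qed.

Lemma companion2_centralizer (x : R) (X : M) : (forall y, x * y = y * x) ->
  (companion2 x * X = X * companion2 x) <-> X = mx2 (X 0 0) (x * X 1 0) (X 1 0) (X 0 0).
Proof.
move=> xX; split => [C | ->].
  have := congr1 (fun A : M => A 0 0) C; have := congr1 (fun A : M => A 1 0) C.
  rewrite !mulmx2E !mxE /= !(mulr0, mul0r, mulr1, mul1r, addr0, add0r) => X11 X01.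
  by apply: matrix2P; rewrite !mxE.
rewrite /companion2 !mulmx2_mx2 !(mulr0, mul0r, mulr1, mul1r, addr0, add0r).
by rewrite -!xX.
Qed.

End Companion.

Lemma mulrn_mx_inj (V : lmodType rat) (m n k : nat) (A B : 'M[V]_(m, n)) :
  (0 < k)%N -> A *+ k = B *+ k -> A = B.
Proof.
move=> k_gt0 /matrixP AB; apply/matrixP => i j; move: (AB i j).
rewrite !mulmxnE -!scaler_nat => /(scalerI _); apply.
by rewrite pnatr_eq0 -lt0n.
Qed.

Lemma rmorph_alg_quat_mx (a b : int) (D : fieldExtType rat)
    (i : {rmorphism D -> 'M[Hq a b]_2}) (c : rat) :
  i c%:A = (quatC c)%:M.
Proof.
have den_gt0 : (0 < `|denq c|)%N by rewrite absz_gt0 denq_neq0.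
have c_den : c *+ `|denq c| = (numq c)%:~R.
  by rewrite -mulr_natr natr_absz gtr0_norm ?denq_gt0 // -numqE.
suff E : i c%:A *+ `|denq c| = (quatC c)%:M *+ `|denq c| by exact: mulrn_mx_inj E.
rewrite -[LHS]rmorphMn scalerMnl c_den scaler_int rmorph_int.
by rewrite -raddfMn /quatC scalerMnl c_den scaler_int raddfMz.
Qed.

Section Centralizer.
Variables (a b : int) (D : fieldExtType rat) (d : rat) (delta : D).
Hypotheses (a_lt0 : a < 0) (b_lt0 : b < 0) (d_gt0 : 0 < d)
  (d_nonsq : forall r : rat, r ^+ 2 != d) (delta_sqr : delta ^+ 2 = d%:A)
  (dimD : \dim {: D} = 2%N).
Local Notation H := (Hq a b).
Local Notation M := ('M[H]_2).
Local Notation HD := (HqD D a b).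

Let a_lt0' : (a%:~R : rat) < 0. Proof. by rewrite ltrz0. Qed.
Let b_lt0' : (b%:~R : rat) < 0. Proof. by rewrite ltrz0. Qed.

Definition quat_ext (x : H) : HD :=
  let: (x0, x1, x2, x3) := x in (x0%:A, x1%:A, x2%:A, x3%:A).

Arguments quat_ext : simpl never.

Lemma quat_extD x y : quat_ext (x + y) = quat_ext x + quat_ext y.
Proof.
case: x y => [[[x0 x1] x2] x3] [[[y0 y1] y2] y3].
by rewrite quat_addE /quat_ext quat_addE -!in_algE !rmorphD.
Qed.

Lemma quat_extM x y : quat_ext (x * y) = quat_ext x * quat_ext y.
Proof.
case: x y => [[[x0 x1] x2] x3] [[[y0 y1] y2] y3].
by rewrite quat_mulE /quat_ext quat_mulE -!in_algE !(rmorphD, rmorphN, rmorphM, rmorph_int).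
Qed.

Lemma quat_ext0 : quat_ext 0 = 0.
Proof. by rewrite /quat_ext /= scale0r. Qed.

Lemma quat_ext1 : quat_ext 1 = 1.
Proof. by rewrite /quat_ext /= scale1r scale0r. Qed.

Lemma quat_extC c : quat_ext (quatC c) = quatC c%:A.
Proof. by rewrite !quatCE /quat_ext scale0r. Qed.

Lemma quat_ext_coord_inj x z x' z' :
  quat_ext x + delta *: quat_ext z = quat_ext x' + delta *: quat_ext z' ->
  x = x' /\ z = z'.
Proof.
case: x z x' z' => [[[x0 x1] x2] x3] [[[z0 z1] z2] z3] [[[y0 y1] y2] y3] [[[w0 w1] w2] w3].
rewrite /quat_ext !quat_scaleE !quat_addE !mulr_algr => -[].
move=> /(quad_coord_inj d_nonsq delta_sqr) [-> ->] /(quad_coord_inj d_nonsq delta_sqr) [-> ->].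
by move=> /(quad_coord_inj d_nonsq delta_sqr) [-> ->] /(quad_coord_inj d_nonsq delta_sqr) [-> ->].
Qed.

Lemma quat_ext_coordP (q : HD) : exists x z, q = quat_ext x + delta *: quat_ext z.
Proof.
case: q => [[[q0 q1] q2] q3].
have [r0 [s0 ->]] := quad_coordP d_nonsq delta_sqr dimD q0.
have [r1 [s1 ->]] := quad_coordP d_nonsq delta_sqr dimD q1.
have [r2 [s2 ->]] := quad_coordP d_nonsq delta_sqr dimD q2.
have [r3 [s3 ->]] := quad_coordP d_nonsq delta_sqr dimD q3.
by exists (r0, r1, r2, r3), (s0, s1, s2, s3); rewrite /quat_ext quat_scaleE quat_addE !mulr_algr.
Qed.

Definition companion_coord (X : M) : HD := quat_ext (X 0 0) + delta *: quat_ext (X 1 0).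

Local Notation J0 := (companion2 (quatC d : H)).

Lemma companion_coordD X Y : companion_coord (X + Y) = companion_coord X + companion_coord Y.
Proof. by rewrite /companion_coord !mxE !quat_extD scalerDr addrACA. Qed.

Lemma companion_coord1 : companion_coord 1 = 1.
Proof. by rewrite /companion_coord !mxE /= quat_ext1 quat_ext0 scaler0 addr0. Qed.

Lemma companion_coordC c X : companion_coord ((quatC c)%:M * X) = c%:A *: companion_coord X.
Proof.
by rewrite /companion_coord !scalar_mx2_mul !quat_extM quat_extC !quatC_mull scalerDr !scalerA mulrC.
Qed.

Lemma companion_coordJ X : companion_coord (J0 * X) = delta *: companion_coord X.
Proof.
rewrite /companion_coord !mulmx2E !mxE /= !(mul0r, mul1r, add0r, addr0).
by rewrite quat_extM quat_extC quatC_mull scalerDr scalerA -expr2 delta_sqr addrC.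
Qed.

Lemma companion_coordM X Y : J0 * X = X * J0 ->
  companion_coord (X * Y) = companion_coord X * companion_coord Y.
Proof.
move=> /(companion2_centralizer _ (@quatC_comm _ _ _ d)) ->.
rewrite /companion_coord !mulmx2E !mxE /= !quat_extD !quat_extM quat_extC.
rewrite -mulrA quatC_mull mulrDl !mulrDr !(quat_scalerAl, quat_scalerAr) scalerA -expr2 delta_sqr.
by rewrite scalerDr addrACA [RHS]addrACA [in RHS](addrC (delta *: _)).
Qed.

Lemma companion_coord_inj X Y : J0 * X = X * J0 -> J0 * Y = Y * J0 ->
  companion_coord X = companion_coord Y -> X = Y.
Proof.
have centralP Z := companion2_centralizer Z (@quatC_comm _ _ _ d).
move=> /centralP -> /centralP ->.
by rewrite /companion_coord !mxE /= => /quat_ext_coord_inj [-> ->].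
Qed.

Variable i : {rmorphism D -> M}.
Local Notation J := (i delta).

Lemma sqr_i_delta : J * J = (quatC d)%:M.
Proof. by rewrite -rmorphM -expr2 delta_sqr rmorph_alg_quat_mx. Qed.

Lemma i_delta10_neq0 : J 1 0 != 0.
Proof.
apply/eqP => J10; have := congr1 (fun A : M => A 0 0) sqr_i_delta.
rewrite mulmx2E J10 mulr0 addr0 mxE /= -expr2 => /(quat_sqr_alg a_lt0' b_lt0' d_gt0) [r].
by apply/eqP.
Qed.

Local Notation P := (mx2 1 (J 0 0) 0 (J 1 0)).
Local Notation Pinv := (mx2 1 (- (J 0 0 * quat_inv (J 1 0))) 0 (quat_inv (J 1 0))).

Lemma P_inv : P * Pinv = 1 /\ Pinv * P = 1.
Proof.
by apply: mx2_unitriangular_inv; [apply: quat_mulV | apply: quat_mulVr];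
  rewrite ?a_lt0' ?b_lt0' ?i_delta10_neq0.
Qed.

Lemma conj_i_delta : Pinv * J * P = J0.
Proof.
have [PPinv PinvP] := P_inv.
by rewrite -mulrA (mx_conj_companion sqr_i_delta) mulrA PinvP mul1r.
Qed.

Lemma i_quad_coord (r s : rat) : i (r%:A + s *: delta) = (quatC r)%:M + (quatC s)%:M * J.
Proof. by rewrite -[s *: delta]mulr_algl rmorphD rmorphM !rmorph_alg_quat_mx. Qed.

Lemma conj_P_Pinv w : P * (Pinv * w * P) * Pinv = w.
Proof. by have [PPinv _] := P_inv; rewrite !mulrA PPinv mul1r -mulrA PPinv mulr1. Qed.

Lemma conj_Pinv_P w : Pinv * (P * w * Pinv) * P = w.
Proof. by have [_ PinvP] := P_inv; rewrite !mulrA PinvP mul1r -mulrA PinvP mulr1. Qed.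

Lemma quatC_mx_comm c (A : M) : (quatC c)%:M * A = A * (quatC c)%:M.
Proof. exact/scalar_mx2_comm/quatC_comm. Qed.

Lemma conj_i_delta_mul u : Pinv * (J * u) * P = J0 * (Pinv * u * P).
Proof. by rewrite -conj_i_delta conj_mul //; case: P_inv. Qed.

Lemma conj_centralizes u : centralizes i u -> J0 * (Pinv * u * P) = Pinv * u * P * J0.
Proof.
move=> /(_ delta) Ju; rewrite -conj_i_delta_mul Ju -conj_i_delta conj_mul //.
by case: P_inv.
Qed.

Definition centralizer_coord (u : M) : HD := companion_coord (Pinv * u * P).

Lemma centralizer_coordZ y u : centralizer_coord (i y * u) = y *: centralizer_coord u.
Proof.
have [r [s ->]] := quad_coordP d_nonsq delta_sqr dimD y.
have conj_quatC_mx c w : Pinv * ((quatC c)%:M * w) * P = (quatC c)%:M * (Pinv * w * P).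
  by rewrite mulrA -quatC_mx_comm !mulrA.
rewrite /centralizer_coord i_quad_coord mulrDl -[_ * J * u]mulrA mulrDr mulrDl.
rewrite !conj_quatC_mx conj_i_delta_mul companion_coordD !companion_coordC companion_coordJ.
by rewrite scalerA mulr_algl -scalerDl.
Qed.

Lemma centralizer_coord_surj q : exists2 u, centralizes i u & centralizer_coord u = q.
Proof.
have [x [z ->]] := quat_ext_coordP q.
set X := mx2 x (quatC d * z) z x.
have XJ0 : J0 * X = X * J0.
  apply/(companion2_centralizer _ (@quatC_comm _ _ _ d)).
  by apply: matrix2P; rewrite !mxE.
exists (P * X * Pinv); last by rewrite /centralizer_coord conj_Pinv_P /companion_coord !mxE.
have Ju : J * (P * X * Pinv) = P * X * Pinv * J.
  have J_conj : J = P * J0 * Pinv by rewrite -conj_i_delta conj_P_Pinv.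
  have [_ PinvP] := P_inv.
  move: J_conj PinvP; set p := P; set p' := Pinv => -> p'p.
  by rewrite !conj_mul // XJ0.
move=> y; have [r [s ->]] := quad_coordP d_nonsq delta_sqr dimD y.
rewrite i_quad_coord mulrDl mulrDr; congr (_ + _); first exact: quatC_mx_comm.
by rewrite -[_ * J * _]mulrA Ju mulrA [in LHS]quatC_mx_comm mulrA.
Qed.

Lemma centralizer_coord_iso : centralizer_Dalg_iso i.
Proof.
have [PPinv PinvP] := P_inv.
exists centralizer_coord; split; [split|split].
- by move=> u v _ _; rewrite /centralizer_coord mulrDr mulrDl companion_coordD.
- move=> u v /conj_centralizes cu _.
  by rewrite /centralizer_coord -companion_coordM // conj_mul.
- by rewrite /centralizer_coord mulr1 PinvP companion_coord1.
- by move=> y u _; apply: centralizer_coordZ.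
- move=> u v /conj_centralizes cu /conj_centralizes cv /(companion_coord_inj cu cv) E.
  by rewrite -(conj_P_Pinv u) E conj_P_Pinv.
- exact: centralizer_coord_surj.
Qed.

End Centralizer.

Theorem theorem6p1 (p : nat) (a b : int)
  (pp : prime p) (a0 : a != 0) (b0 : b != 0)
  (Hram : ramified_exactly_at_p_inf p a b)
  (D : fieldExtType rat) (HD : real_quadratic_field D)
  (i : {rmorphism D -> 'M[Hq a b]_2}) (inj_i : injective i) :
  centralizer_Dalg_iso i.
Proof.
(* Only the ramification at infinity, i.e. definiteness of [Hq a b], is needed. *)
have [[/andP [a_lt0 b_lt0] _]] := Hram.
have [dimD [d [delta [d_gt0 d_nonsq delta_sqr]]]] := HD.
exact: centralizer_coord_iso a_lt0 b_lt0 d_gt0 d_nonsq delta_sqr dimD i.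
Qed.
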